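(* Under the hypotheses of the conservation lemma (i.e. $(p^*,q^* )\in(0,1)^2$ maximizes $\ell(p,q,K)$ over $[0,1]^2$ with finite value), with $g(x)=p^*K(x)+q^*(1-K(x))$ we have $g(x)\in[\frac{1}{|B|},1]$ for every $x\in M$ and $g(x)\in[0,\frac{|B|-1}{|B|}]$ for every $x\in B\setminus M$.
   Context: $B\subset\mathbb{R}^d$ finite nonempty, $m:B\to\{0,1\}$, $M=\{x\in B:m(x)=1\}$. For $p,q\in[0,1]$ and $K:B\to[0,1]$, $g(x)=pK(x)+q(1-K(x))$ and $\ell(p,q,K)=\frac{1}{|B|}\big(\sum_{x\in M}\log g(x)+\sum_{x\in B\setminus M}\log(1-g(x))\big)$, with $\log 0=-\infty$. *)

From Stdlib Require Import Reals Lra List.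
From Stdlib Require Vectors.Fin.
Import ListNotations.
Open Scope R_scope.

Definition point (d : nat) : Type := Fin.t d -> R.

(* Extended reals [-oo, +oo) : just what is needed for log with log 0 = -oo. *)
Inductive ER : Type := NegInf | Fi (r : R).

Definition eadd (a b : ER) : ER :=
  match a, b with
  | Fi x, Fi y => Fi (x + y)
  | _, _ => NegInf
  end.

Definition escale (c : R) (a : ER) : ER :=
  match a with Fi x => Fi (c * x) | NegInf => NegInf end.

Definition ele (a b : ER) : Prop :=
  match a, b with
  | NegInf, _ => True
  | Fi _, NegInf => False
  | Fi x, Fi y => x <= y
  end.

(* log on [0, +oo) with log 0 = -oo (nonpositive arguments sent to -oo). *)
Definition elog (x : R) : ER :=
  if Rlt_dec 0 x then Fi (ln x) else NegInf.

Definition esum {X : Type} (f : X -> ER) (l : list X) : ER :=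
  fold_right (fun x acc => eadd (f x) acc) (Fi 0) l.

Definition gfun {X : Type} (p q : R) (K : X -> R) (x : X) : R :=
  p * K x + q * (1 - K x).

(* ell(p,q,K) = 1/|B| ( sum_{x in M} log g(x) + sum_{x in B\M} log (1 - g(x)) ),
   with B given as a duplicate-free list and m : B -> {0,1} as a boolean function
   (M = {x in B | m x = true}). *)
Definition ell {X : Type} (B : list X) (m : X -> bool) (p q : R) (K : X -> R) : ER :=
  escale (/ INR (length B))
    (eadd (esum (fun x => elog (gfun p q K x)) (filter m B))
          (esum (fun x => elog (1 - gfun p q K x)) (filter (fun x => negb (m x)) B))).

From Stdlib Require Import Reals List Lra Lia.
Open Scope R_scope.

(* For p, q in (0,1) every value g(x) lies in (0,1),
   so ell(p,q,K) = (1/|B|) ln L(p,q), where the likelihood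
   L(p,q) = prod_{x in M} g(x) * prod_{x in B\M} (1 - g(x)) is positive, and
   maximality of (ps,qs) becomes L(p,q) <= L(ps,qs) on (0,1)^2.
   - Scaling (p,q) by t in (0,1) scales g by t.  Comparing L along this ray,
     keeping only the factor of a point x of B\M, gives
     t^|M| (1 - t g(x)) <= 1 - g(x) for all t in (0,1); letting t -> 1
     (through Bernoulli's inequality) yields g(x) (|M|+1) <= |M|.
   - Symmetrically, moving (p,q) towards (1,1) scales 1 - g by t, which gives
     (1 - g(x)) (|B\M|+1) <= |B\M| for x in M.
   Since |M| + |B\M| = |B| and the other set contains x, the bounds follow. *)

Fixpoint prodl {X : Type} (f : X -> R) (l : list X) : R :=
  match l with nil => 1 | a :: l' => f a * prodl f l' end.

Section ListProduct.
Context {X : Type}.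

Lemma prodl_app (f : X -> R) l1 l2 : prodl f (l1 ++ l2) = prodl f l1 * prodl f l2.
Proof. induction l1 as [|a l1 IH]; simpl; [ring | rewrite IH; ring]. Qed.

Lemma prodl_pos (f : X -> R) l : (forall y, In y l -> 0 < f y) -> 0 < prodl f l.
Proof.
  induction l as [|a l IH]; simpl; intros H; [lra|].
  apply Rmult_lt_0_compat; auto.
Qed.

Lemma prodl_ext (f g : X -> R) l :
  (forall y, In y l -> f y = g y) -> prodl f l = prodl g l.
Proof.
  induction l as [|a l IH]; simpl; intros H; auto.
  rewrite H, IH by auto; reflexivity.
Qed.

Lemma prodl_scale (u : X -> R) t l :
  prodl (fun y => t * u y) l = t ^ length l * prodl u l.
Proof. induction l as [|a l IH]; simpl; [ring | rewrite IH; ring]. Qed.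

Lemma prodl_le (f g : X -> R) l :
  (forall y, In y l -> 0 < f y <= g y) -> prodl f l <= prodl g l.
Proof.
  induction l as [|a l IH]; simpl; intros H; [lra|].
  assert (Ha := H a (or_introl eq_refl)).
  assert (IHl : prodl f l <= prodl g l) by auto.
  assert (0 < prodl f l) by (apply prodl_pos; intros y Hy; apply H; auto).
  nra.
Qed.

Lemma prodl_pick x l : In x l ->
  exists l', incl l' l /\ forall f : X -> R, prodl f l = f x * prodl f l'.
Proof.
  intros Hx. destruct (in_split x l Hx) as (l1 & l2 & ->).
  exists (l1 ++ l2). split.
  - intros y Hy. apply in_app_or in Hy. apply in_or_app; simpl; tauto.
  - intros f. rewrite !prodl_app; simpl; ring.
Qed.

Lemma esum_elog (h : X -> R) l : (forall y, In y l -> 0 < h y) ->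
  esum (fun y => elog (h y)) l = Fi (ln (prodl h l)).
Proof.
  induction l as [|a l IH]; simpl; intros H.
  - rewrite ln_1; reflexivity.
  - rewrite IH by auto. unfold elog.
    destruct (Rlt_dec 0 (h a)) as [Ha | Ha]; [| exfalso; auto].
    simpl. rewrite ln_mult; auto. apply prodl_pos; auto.
Qed.

End ListProduct.

Lemma bernoulli s k : s <= 1 -> 1 - INR k * s <= (1 - s) ^ k.
Proof.
  intros Hs. induction k as [|k IH]; [simpl; lra|].
  rewrite S_INR; simpl.
  assert (0 <= INR k) by apply pos_INR.
  nra.
Qed.

Lemma nonpos_of_le_small c a : 0 <= a ->
  (forall s, 0 < s < 1 -> c <= a * s) -> c <= 0.
Proof.
  intros Ha H. destruct (Rle_dec c 0) as [|Hc]; [assumption|].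
  set (s := c / (2 * (a + c + 1))).
  assert (Hs : s * (2 * (a + c + 1)) = c) by (unfold s; field; lra).
  assert (0 < s) by (unfold s; apply Rdiv_lt_0_compat; lra).
  specialize (H s ltac:(nra)). nra.
Qed.

(* One-variable form of "the derivative at t = 1 is nonnegative": if
   t^k (1 - t w) <= 1 - w for every t in (0,1), then w (k+1) <= k. *)
Lemma power_factor_bound k w : 0 <= w <= 1 ->
  (forall t, 0 < t < 1 -> t ^ k * (1 - t * w) <= 1 - w) ->
  w * (INR k + 1) <= INR k.
Proof.
  intros Hw H.
  assert (Hk : 0 <= INR k) by apply pos_INR.
  cut (w - INR k * (1 - w) <= 0); [lra|].
  apply (nonpos_of_le_small _ (INR k * w)); [nra|].
  intros s Hs.
  assert (Hmax := H (1 - s) ltac:(lra)).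
  assert (Hb := bernoulli s k ltac:(lra)).
  assert (0 <= 1 - (1 - s) * w) by nra.
  assert (Hlow : (1 - INR k * s) * (1 - (1 - s) * w) <= 1 - w) by nra.
  (* Hlow expands to s * (w - k (1 - w)) <= s * (k w s). *)
  assert (s * (w - INR k * (1 - w)) <= s * (INR k * w * s)) by nra.
  nra.
Qed.

Lemma prodl_one_factor {X : Type} (w : X -> R) t x l : 0 < t < 1 ->
  (forall y, In y l -> 0 < w y < 1) -> In x l ->
  (1 - t * w x) * prodl (fun y => 1 - w y) l
  <= (1 - w x) * prodl (fun y => 1 - t * w y) l.
Proof.
  intros Ht Hw Hx.
  destruct (prodl_pick x l Hx) as (l' & Hincl & Hsplit).
  rewrite !Hsplit.
  assert (Hrest : prodl (fun y => 1 - w y) l' <= prodl (fun y => 1 - t * w y) l').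
  { apply prodl_le. intros y Hy. assert (Hy' := Hw y (Hincl y Hy)). nra. }
  assert (Hwx := Hw x Hx).
  assert (t * w x < w x) by (assert (0 < (1 - t) * w x) by (apply Rmult_lt_0_compat; lra); lra).
  assert (0 <= (1 - t * w x) * (1 - w x)) by (apply Rmult_le_pos; lra).
  assert (0 <= (1 - t * w x) * (1 - w x)
               * (prodl (fun y => 1 - t * w y) l' - prodl (fun y => 1 - w y) l'))
    by (apply Rmult_le_pos; lra).
  nra.
Qed.

Lemma ray_bound {X : Type} (L1 L2 : list X) (u w : X -> R) x :
  (forall y, In y L1 -> 0 < u y) -> (forall y, In y L2 -> 0 < w y < 1) ->
  In x L2 ->
  (forall t, 0 < t < 1 ->
     prodl (fun y => t * u y) L1 * prodl (fun y => 1 - t * w y) L2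
     <= prodl u L1 * prodl (fun y => 1 - w y) L2) ->
  w x * (INR (length L1) + 1) <= INR (length L1).
Proof.
  intros Hu Hw Hx Hray. assert (Hwx := Hw x Hx).
  apply power_factor_bound; [lra|].
  intros t Ht. specialize (Hray t Ht). rewrite prodl_scale in Hray.
  assert (Hone := prodl_one_factor w t x L2 Ht Hw Hx).
  assert (U : 0 < prodl u L1) by (apply prodl_pos; auto).
  assert (W : 0 < prodl (fun y => 1 - w y) L2)
    by (apply prodl_pos; intros y Hy; assert (Hw' := Hw y Hy); lra).
  assert (Tk : 0 < t ^ length L1) by (apply pow_lt; lra).
  set (T := prodl (fun y => 1 - t * w y) L2) in *.
  set (P := prodl (fun y => 1 - w y) L2) in *.
  set (U1 := prodl u L1) in *.
  apply Rmult_le_reg_r with (U1 * P); [nra|].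
  (* chain: t^k (1 - t w x) U1 P <= t^k (1 - w x) U1 T <= (1 - w x) U1 P *)
  assert (t ^ length L1 * U1 * ((1 - t * w x) * P)
          <= t ^ length L1 * U1 * ((1 - w x) * T))
    by (apply Rmult_le_compat_l; [nra | exact Hone]).
  assert ((1 - w x) * (t ^ length L1 * U1 * T) <= (1 - w x) * (U1 * P))
    by (apply Rmult_le_compat_l; [lra | exact Hray]).
  nra.
Qed.

Lemma gfun_in_01 {X : Type} p q (K : X -> R) y :
  0 < p < 1 -> 0 < q < 1 -> 0 <= K y <= 1 -> 0 < gfun p q K y < 1.
Proof.
  unfold gfun; intros Hp Hq HK.
  (* g is a convex combination of p and q, so it lies between them. *)
  destruct (Rle_dec p q).
  - assert (0 <= (q - p) * K y) by nra. assert (0 <= (q - p) * (1 - K y)) by nra.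
    split; nra.
  - assert (0 <= (p - q) * K y) by nra. assert (0 <= (p - q) * (1 - K y)) by nra.
    split; nra.
Qed.

(* The likelihood whose logarithm, divided by |B|, is ell. *)
Definition lik {X : Type} (B : list X) (m : X -> bool) (p q : R) (K : X -> R) : R :=
  prodl (gfun p q K) (filter m B) *
  prodl (fun y => 1 - gfun p q K y) (filter (fun x => negb (m x)) B).

Section Likelihood.
Context {X : Type} (B : list X) (m : X -> bool) (K : X -> R).
Hypothesis HK : forall x, In x B -> 0 <= K x <= 1.

Lemma lik_factors_pos p q : 0 < p < 1 -> 0 < q < 1 ->
  0 < prodl (gfun p q K) (filter m B) /\
  0 < prodl (fun y => 1 - gfun p q K y) (filter (fun x => negb (m x)) B).
Proof.
  intros Hp Hq. split; apply prodl_pos; intros y Hy; apply filter_In in Hy;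
    assert (Hg := gfun_in_01 p q K y Hp Hq (HK y (proj1 Hy))); lra.
Qed.

Lemma lik_pos p q : 0 < p < 1 -> 0 < q < 1 -> 0 < lik B m p q K.
Proof.
  intros Hp Hq. destruct (lik_factors_pos p q Hp Hq).
  unfold lik; apply Rmult_lt_0_compat; assumption.
Qed.

Lemma ell_lik p q : 0 < p < 1 -> 0 < q < 1 ->
  ell B m p q K = Fi (/ INR (length B) * ln (lik B m p q K)).
Proof.
  intros Hp Hq. destruct (lik_factors_pos p q Hp Hq) as [H1 H2].
  unfold ell, lik.
  rewrite (esum_elog (gfun p q K)), (esum_elog (fun y => 1 - gfun p q K y)).
  - simpl. rewrite ln_mult; auto.
  - intros y Hy. apply filter_In in Hy.
    assert (Hg := gfun_in_01 p q K y Hp Hq (HK y (proj1 Hy))); lra.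
  - intros y Hy. apply filter_In in Hy.
    apply gfun_in_01; auto. apply HK; tauto.
Qed.

Lemma lik_le_of_max ps qs p q :
  B <> nil -> 0 < ps < 1 -> 0 < qs < 1 -> 0 < p < 1 -> 0 < q < 1 ->
  ele (ell B m p q K) (ell B m ps qs K) -> lik B m p q K <= lik B m ps qs K.
Proof.
  intros HB Hps Hqs Hp Hq Hmax.
  rewrite !ell_lik in Hmax by auto. simpl in Hmax.
  assert (HN : 0 < / INR (length B)).
  { apply Rinv_0_lt_compat, lt_0_INR. destruct B; simpl; [congruence | lia]. }
  apply Rnot_lt_le; intros Hlt.
  assert (Hln := ln_increasing _ _ (lik_pos ps qs Hps Hqs) Hlt).
  apply Rmult_lt_compat_l with (r := / INR (length B)) in Hln; lra.
Qed.

Lemma lik_scale_down t p q :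
  lik B m (t * p) (t * q) K =
  prodl (fun y => t * gfun p q K y) (filter m B) *
  prodl (fun y => 1 - t * gfun p q K y) (filter (fun x => negb (m x)) B).
Proof. unfold lik; f_equal; apply prodl_ext; intros; unfold gfun; ring. Qed.

Lemma lik_scale_up t p q :
  lik B m (1 - t * (1 - p)) (1 - t * (1 - q)) K =
  prodl (fun y => 1 - t * (1 - gfun p q K y)) (filter m B) *
  prodl (fun y => t * (1 - gfun p q K y)) (filter (fun x => negb (m x)) B).
Proof. unfold lik; f_equal; apply prodl_ext; intros; unfold gfun; ring. Qed.

End Likelihood.

Lemma gap_from_count (k n : nat) w : (k + 1 <= n)%nat ->
  w * (INR k + 1) <= INR k -> / INR n <= 1 - w.
Proof.
  intros Hkn Hw.
  assert (Hle : INR k + 1 <= INR n)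
    by (rewrite <- S_INR; apply le_INR; lia).
  assert (0 <= INR k) by apply pos_INR.
  assert (Hpos : 0 < INR n) by lra.
  apply Rmult_le_reg_r with (INR n); [lra|].
  rewrite Rinv_l by lra. nra.
Qed.

Theorem lemmaA2 (d : nat) (B : list (point d)) (m : point d -> bool)
  (K : point d -> R) (ps qs : R) :
  NoDup B -> B <> nil ->
  (forall x, In x B -> 0 <= K x <= 1) ->
  0 < ps < 1 -> 0 < qs < 1 ->
  (forall p q, 0 <= p <= 1 -> 0 <= q <= 1 -> ele (ell B m p q K) (ell B m ps qs K)) ->
  (exists v : R, ell B m ps qs K = Fi v) ->
  forall x, In x B ->
    (m x = true -> / INR (length B) <= gfun ps qs K x <= 1) /\
    (m x = false -> 0 <= gfun ps qs K x <= (INR (length B) - 1) / INR (length B)).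
Proof.
  intros _ HB HK Hps Hqs Hmax _ x Hx.
  set (g := gfun ps qs K).
  set (M := filter m B). set (NM := filter (fun y => negb (m y)) B).
  assert (Hg : forall y, In y B -> 0 < g y < 1) by (intros; apply gfun_in_01; auto).
  assert (HgM : forall y, In y M -> 0 < g y < 1)
    by (intros y Hy; apply filter_In in Hy; apply Hg; tauto).
  assert (HgNM : forall y, In y NM -> 0 < g y < 1)
    by (intros y Hy; apply filter_In in Hy; apply Hg; tauto).
  assert (Hlen : (length M + length NM)%nat = length B) by apply filter_length.
  assert (Hlik : forall p q, 0 < p < 1 -> 0 < q < 1 -> lik B m p q K <= lik B m ps qs K)
    by (intros p q Hp Hq; apply lik_le_of_max; auto; apply Hmax; lra).
  assert (Hgx := Hg x Hx). split; intros Hm.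
  - assert (HxM : In x M) by (apply filter_In; auto).
    assert (Hray : (1 - g x) * (INR (length NM) + 1) <= INR (length NM)).
    { apply (ray_bound NM M (fun y => 1 - g y) (fun y => 1 - g y)); auto.
      - intros y Hy. specialize (HgNM y Hy). lra.
      - intros y Hy. specialize (HgM y Hy). lra.
      - intros t Ht.
        specialize (Hlik (1 - t * (1 - ps)) (1 - t * (1 - qs)) ltac:(nra) ltac:(nra)).
        rewrite lik_scale_up in Hlik. unfold lik in Hlik. fold M NM g in Hlik.
        rewrite (prodl_ext (fun y => 1 - (1 - g y)) g) by (intros; ring).
        lra. }
    assert (HM : (1 <= length M)%nat) by (destruct M; simpl in *; [tauto | lia]).
    assert (Hgap := gap_from_count (length NM) (length B) (1 - g x) ltac:(lia) Hray).
    lra.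
  - assert (HxNM : In x NM) by (apply filter_In; rewrite Hm; auto).
    assert (Hray : g x * (INR (length M) + 1) <= INR (length M)).
    { apply (ray_bound M NM g g); auto.
      - intros y Hy. apply HgM; auto.
      - intros t Ht. specialize (Hlik (t * ps) (t * qs) ltac:(nra) ltac:(nra)).
        rewrite lik_scale_down in Hlik. exact Hlik. }
    assert (HNM : (1 <= length NM)%nat) by (destruct NM; simpl in *; [tauto | lia]).
    assert (Hgap := gap_from_count (length M) (length B) (g x) ltac:(lia) Hray).
    assert (HN : 0 < INR (length B)) by (apply lt_0_INR; lia).
    split; [lra|]. unfold Rdiv. rewrite Rmult_minus_distr_r, Rinv_r by lra. lra.
Qed.
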